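(* Let $\mathbf X=(X_1,\dots,X_n)$ and $\mathbf Y=(Y_1,\dots,Y_m)$ be variables and let $\mathcal A$ be the unital complex algebra generated by $\mathbf X,\mathbf Y$ subject only to the relations $[X_i,Y_j]=0$ for all $i,j$ (i.e. $\mathbb C\langle\mathbf X,\mathbf Y\rangle$ modulo the two-sided ideal generated by these commutators). Define $\Theta_{(1,2)}:\mathcal A\otimes\mathcal A\to\mathcal A\otimes\mathcal A$ by $\Theta_{(1,2)}(Z_1\otimes Z_2)=Z_2\otimes Z_1$, and equip $\mathcal A\otimes\mathcal A$ with the multiplication $(Z_1\otimes Z_2)(W_1\otimes W_2)=Z_1W_1\otimes Z_2W_2$. For each $i$ let $\partial_{\ell,X_i}$ be the left bi-free difference quotient of $X_i$ with respect to $(\mathbb C\langle\hat{\mathbf X}_i\rangle,\mathbb C\langle\mathbf Y\rangle)$ and for each $j$ let $\partial_{r,Y_j}$ be the right bi-free difference quotient of $Y_j$ with respect to $(\mathbb C\langle\mathbf X\rangle,\mathbb C\langle\hat{\mathbf Y}_j\rangle)$. Then for every $P\in\mathcal A$, \[ \sum_{i=1}^n\Big(\partial_{\ell,X_i}(P)(X_i\otimes1)-(1\otimes X_i)\partial_{\ell,X_i}(P)\Big)-\Theta_{(1,2)}\Big(\sum_{j=1}^m\big(\partial_{r,Y_j}(P)(Y_j\otimes1)-(1\otimes Y_j)\partial_{r,Y_j}(P)\big)\Big)=P\otimes1-1\otimes P. \] In particular, if $P\in\mathcal A$ satisfies $\partial_{\ell,X_i}(P)=0$ and $\partial_{r,Y_j}(P)=0$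 for all $i,j$, then $P$ is a scalar multiple of $1$.
   Context: $\hat{\mathbf X}_i$ denotes $(X_1,\dots,X_{i-1},X_{i+1},\dots,X_n)$, similarly $\hat{\mathbf Y}_j$. Bi-free difference quotients: let $L$ (''left letters'') and $R$ (''right letters'') be sets of generators. For $X\in L$ and a word $Z_1\cdots Z_k$ with each $Z_p\in L\cup R$, $\partial_{\ell,X}(Z_1\cdots Z_k)=\sum_{q:\,Z_q=X}\Big(Z_1\cdots Z_{q-1}\prod_{p>q,\,Z_p\in R}Z_p\Big)\otimes\prod_{p>q,\,Z_p\in L}Z_p$, and for $Y\in R$, $\partial_{r,Y}(Z_1\cdots Z_k)=\sum_{q:\,Z_q=Y}\Big(Z_1\cdots Z_{q-1}\prod_{p>q,\,Z_p\in L}Z_p\Big)\otimes\prod_{p>q,\,Z_p\in R}Z_p$, where all products are taken in increasing order of index (empty product $=1$), extended linearly. ''With respect to $(B_\ell,B_r)$'' means the left letters are $X$ together with elements of $B_\ell$ (here the other $X$'s) and the right letters are elements of $B_r$ (here the $Y$'s), and analogously on the right. These maps are well defined on $\mathcal A$ since they respect commutation of left letters with right letters. *)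

From HB Require Import structures.
From mathcomp Require Import all_boot all_order all_algebra.
From mathcomp Require Import complex.
From mathcomp Require Import reals.

Set Implicit Arguments.
Unset Strict Implicit.
Unset Printing Implicit Defensive.
Import Order.TTheory GRing.Theory Num.Theory.
Local Open Scope ring_scope.

Section BiFree.
Variables (K : fieldType) (n m : nat).

(* Letters: inl i is X_i (a "left" letter), inr j is Y_j (a "right" letter). *)
Definition letter := ('I_n + 'I_m)%type.
Definition word := seq letter.
Definition isL (z : letter) : bool := if z is inl _ then true else false.
Definition isR (z : letter) : bool := if z is inr _ then true else false.

(* Elements of the free algebra K<X,Y>: finite formal linear combinations of
   words (a list of (coefficient, word) pairs, summed). *)
Definition fa := seq (K * word).
(* Elements of K<X,Y> (x) K<X,Y>: formal combinations of pairs of words. *)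
Definition ften := seq (K * (word * word)).

Definition fa_coef (p : fa) (w : word) : K :=
  \sum_(t <- p) (t.2 == w)%:R * t.1.
Definition ften_coef (s : ften) (w : word * word) : K :=
  \sum_(t <- s) (t.2 == w)%:R * t.1.

Definition fa_scale (c : K) (p : fa) : fa := [seq (c * t.1, t.2) | t <- p].
Definition fa_mul (p q : fa) : fa :=
  [seq (a.1 * b.1, a.2 ++ b.2) | a <- p, b <- q].
Definition ften_scale (c : K) (s : ften) : ften := [seq (c * t.1, t.2) | t <- s].
Definition ften_add (s t : ften) : ften := s ++ t.
Definition ften_sub (s t : ften) : ften := s ++ ften_scale (-1) t.
Definition ften_mul (s t : ften) : ften :=
  [seq (a.1 * b.1, (a.2.1 ++ b.2.1, a.2.2 ++ b.2.2)) | a <- s, b <- t].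
Definition Theta12 (s : ften) : ften := [seq (t.1, (t.2.2, t.2.1)) | t <- s].

Definition fa_one : fa := [:: (1, [::])].
Definition ften_simple (u v : word) : ften := [:: (1, (u, v))].
Definition ten1 (p : fa) : ften := [seq (t.1, (t.2, [::])) | t <- p].
Definition one_ten (p : fa) : ften := [seq (t.1, ([::], t.2)) | t <- p].

Definition comm (i : 'I_n) (j : 'I_m) : fa :=
  [:: (1, [:: inl i; inr j]); (-1, [:: inr j; inl i])].
(* generator data (c, u, (i,j), v) stands for c * u [X_i,Y_j] v *)
Definition ideal_gen (g : K * word * ('I_n * 'I_m) * word) : fa :=
  let: (c, u, ij, v) := g in
  fa_scale c (fa_mul [:: (1, u)] (fa_mul (comm ij.1 ij.2) [:: (1, v)])).
(* Equality in A = K<X,Y> / I *)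
Definition A_eq (p q : fa) : Prop :=
  exists g : seq (K * word * ('I_n * 'I_m) * word),
    forall w, fa_coef p w - fa_coef q w = fa_coef (flatten (map ideal_gen g)) w.

(* Equality in A (x) A = (F (x) F) / (I (x) F + F (x) I):
   data (g, w, b) stands for g (x) w if b, and w (x) g otherwise. *)
Definition tideal_gen (h : K * word * ('I_n * 'I_m) * word * word * bool) : ften :=
  let: (c, u, ij, v, w, b) := h in
  let e := ideal_gen (c, u, ij, v) in
  if b then [seq (t.1, (t.2, w)) | t <- e] else [seq (t.1, (w, t.2)) | t <- e].
Definition AA_eq (s t : ften) : Prop :=
  exists g : seq (K * word * ('I_n * 'I_m) * word * word * bool),
    forall w, ften_coef s w - ften_coef t w
              = ften_coef (flatten (map tideal_gen g)) w.

(* Left bi-free difference quotient of X_i w.r.t. (K<hat X_i>, K<Y>):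
   left letters = all X's, right letters = all Y's. *)
Definition dl_word (i : 'I_n) (w : word) : ften :=
  [seq (1, (take q w ++ filter isR (drop q.+1 w), filter isL (drop q.+1 w)))
  | q <- iota 0 (size w) & nth (inl i) w q == inl i].
(* Right bi-free difference quotient of Y_j w.r.t. (K<X>, K<hat Y_j>). *)
Definition dr_word (j : 'I_m) (w : word) : ften :=
  [seq (1, (take q w ++ filter isL (drop q.+1 w), filter isR (drop q.+1 w)))
  | q <- iota 0 (size w) & nth (inr j) w q == inr j].

Definition dl (i : 'I_n) (p : fa) : ften :=
  flatten [seq ften_scale t.1 (dl_word i t.2) | t <- p].
Definition dr (j : 'I_m) (p : fa) : ften :=
  flatten [seq ften_scale t.1 (dr_word j t.2) | t <- p].


Definition left_part (p : fa) : ften :=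
  flatten [seq ften_sub (ften_mul (dl i p) (ften_simple [:: inl i] [::]))
                        (ften_mul (ften_simple [::] [:: inl i]) (dl i p))
          | i <- enum 'I_n].
Definition right_part (p : fa) : ften :=
  flatten [seq ften_sub (ften_mul (dr j p) (ften_simple [:: inr j] [::]))
                        (ften_mul (ften_simple [::] [:: inr j]) (dr j p))
          | j <- enum 'I_m].

End BiFree.

(* For a monomial u write R(u), L(u) for the subwords of its Y-letters and of
   its X-letters.  Prepending a letter y to u prepends y to the first tensor
   factor of every term of sum_i d_{l,X_i}(u)(X_i (x) 1) - (1 (x) X_i) d_{l,X_i}(u),
   and, when y = X_i, adds R(u)X_i (x) L(u) - R(u) (x) X_i L(u).  Since X_i
   commutes with R(u) modulo the ideal, induction on u shows that this sum is
   u (x) 1 - R(u) (x) L(u) in A (x) A.  Symmetrically the right sum is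
   u (x) 1 - L(u) (x) R(u), whose flip is 1 (x) u - R(u) (x) L(u), and the
   difference of the two is u (x) 1 - 1 (x) u.  If all difference quotients of
   P vanish, both sums vanish, so P (x) 1 = 1 (x) P; reading off the
   coefficients of w (x) 1 shows that P is its constant coefficient times 1. *)

From HB Require Import structures.
From mathcomp Require Import all_boot all_order all_algebra.
From mathcomp Require Import complex.
From mathcomp Require Import reals.
From mathcomp Require Import ring.
Import GRing.Theory.
Local Open Scope ring_scope.
Set Implicit Arguments.
Unset Strict Implicit.

Section TensorIdeal.
Variables (K : fieldType) (n m : nat).
Local Notation letter := (letter n m).
Local Notation word := (word n m).
Local Notation biword := (word * word)%type.
Local Notation ften := (ften K n m).
Local Notation tgen := (K * word * ('I_n * 'I_m) * word * word * bool)%type.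

(* Identities in A (x) A are checked by pairing both sides with an arbitrary
   functional [F] on pairs of words. *)
Definition ften_eval (F : biword -> K) (s : ften) : K := \sum_(t <- s) F t.2 * t.1.

Definition ften_map (f : biword -> biword) (s : ften) : ften :=
  [seq (t.1, f t.2) | t <- s].

Definition wrap (a1 b1 a2 b2 : word) (k : biword) : biword :=
  (a1 ++ k.1 ++ b1, a2 ++ k.2 ++ b2).

Lemma ften_coefE s w : ften_coef s w = ften_eval (fun k => (k == w)%:R) s.
Proof. by []. Qed.

Lemma ften_eval_nil F : ften_eval F [::] = 0.
Proof. exact: big_nil. Qed.

Lemma ften_eval_cat F s t : ften_eval F (s ++ t) = ften_eval F s + ften_eval F t.
Proof. exact: big_cat. Qed.

Lemma ften_eval_scale F c s : ften_eval F (ften_scale c s) = c * ften_eval F s.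
Proof.
rewrite /ften_eval big_map big_distrr; apply: eq_bigr => t _ /=.
by rewrite mulrCA.
Qed.

Lemma ften_eval_sub F s t :
  ften_eval F (ften_sub s t) = ften_eval F s - ften_eval F t.
Proof. by rewrite ften_eval_cat ften_eval_scale mulN1r. Qed.

Lemma ften_eval_flatten F (ss : seq ften) :
  ften_eval F (flatten ss) = \sum_(s <- ss) ften_eval F s.
Proof. exact: big_flatten. Qed.

Lemma ften_eval_map F f s :
  ften_eval F (ften_map f s) = ften_eval (fun k => F (f k)) s.
Proof. exact: big_map. Qed.

Lemma ften_eval_simple F a b : ften_eval F (ften_simple K a b) = F (a, b).
Proof. by rewrite /ften_eval big_seq1 mulr1. Qed.

Lemma ften_eval_lincomb F (P : fa K n m) (f : word -> ften) :
  ften_eval F (flatten [seq ften_scale t.1 (f t.2) | t <- P]) =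
  \sum_(t <- P) t.1 * ften_eval F (f t.2).
Proof. by rewrite ften_eval_flatten big_map; apply: eq_bigr => t _; rewrite ften_eval_scale. Qed.

Lemma ften_eval_Theta12 F s :
  ften_eval F (Theta12 s) = ften_eval (fun k => F (k.2, k.1)) s.
Proof. exact: ften_eval_map. Qed.

Lemma ften_eval_ten1 F (P : fa K n m) :
  ften_eval F (ten1 P) = \sum_(t <- P) t.1 * F (t.2, [::]).
Proof. by rewrite /ften_eval big_map; apply: eq_bigr => t _; rewrite mulrC. Qed.

Lemma ften_eval_one_ten F (P : fa K n m) :
  ften_eval F (one_ten P) = \sum_(t <- P) t.1 * F ([::], t.2).
Proof. by rewrite /ften_eval big_map; apply: eq_bigr => t _; rewrite mulrC. Qed.

Lemma eq_ften_eval F G s : F =1 G -> ften_eval F s = ften_eval G s.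
Proof. by move=> eFG; apply: eq_bigr => t _; rewrite eFG. Qed.

Lemma ften_eval_mulr F s a b : ften_eval F (ften_mul s (ften_simple K a b)) =
  ften_eval (fun k => F (k.1 ++ a, k.2 ++ b)) s.
Proof.
elim: s => [|t s IH]; first by rewrite /ften_eval !big_nil.
by rewrite /ften_eval /= !big_cons -/(ften_eval _ _) IH mulr1.
Qed.

Lemma ften_eval_mull F s a b : ften_eval F (ften_mul (ften_simple K a b) s) =
  ften_eval (fun k => F (a ++ k.1, b ++ k.2)) s.
Proof.
rewrite /ften_eval /ften_mul /= cats0 big_map.
by apply: eq_bigr => t _; rewrite mul1r.
Qed.

Lemma ften_eval_coef F s t :
  ften_coef s =1 ften_coef t -> ften_eval F s = ften_eval F t.
Proof.
(* Both pairings are sums over the finitely many pairs of words occurring in [s] or [t]. *)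
move=> est; pose S := undup (map snd s ++ map snd t).
suff evalS r : {subset map snd r <= S} ->
    ften_eval F r = \sum_(k <- S) F k * ften_coef r k.
  rewrite !evalS; first by apply: eq_bigr => k _; rewrite est.
  - by move=> k kt; rewrite mem_undup mem_cat kt orbT.
  by move=> k ks; rewrite mem_undup mem_cat ks.
move=> sub; under eq_bigr => k _ do rewrite /ften_coef big_distrr.
rewrite exchange_big; apply: eq_big_seq => u us.
rewrite (bigD1_seq u.2) ?undup_uniq ?sub ?map_f //= eqxx mul1r big1 ?addr0 //.
by move=> k /negbTE kn; rewrite eq_sym kn mul0r mulr0.
Qed.

Definition in_tideal (s : ften) : Prop :=
  exists g : seq tgen, ften_coef s =1 ften_coef (flatten (map (@tideal_gen K n m) g)).

Lemma AA_eq_tideal s t : AA_eq s t <-> in_tideal (ften_sub s t).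
Proof.
have coef_sub w : ften_coef (ften_sub s t) w = ften_coef s w - ften_coef t w.
  by rewrite !ften_coefE ften_eval_sub.
by split=> -[g eg]; exists g => w; rewrite -eg coef_sub.
Qed.

Lemma eq_in_tideal_eval s t :
  in_tideal s -> (forall F, ften_eval F s = ften_eval F t) -> in_tideal t.
Proof. by move=> [g eg] est; exists g => w; rewrite ften_coefE -est -ften_coefE. Qed.

Lemma in_tideal_AA_eq0 s : AA_eq s [::] -> in_tideal s.
Proof.
move/AA_eq_tideal=> Is; apply: (eq_in_tideal_eval Is) => F.
by rewrite ften_eval_sub ften_eval_nil subr0.
Qed.

Lemma in_tideal_nil : in_tideal [::].
Proof. by exists [::]. Qed.

Lemma in_tideal_cat s t : in_tideal s -> in_tideal t -> in_tideal (s ++ t).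
Proof.
move=> [g eg] [h eh]; exists (g ++ h) => w.
by rewrite map_cat flatten_cat !ften_coefE !ften_eval_cat -!ften_coefE eg eh.
Qed.

Lemma in_tideal_flatten (ss : seq ften) :
  (forall s, s \in ss -> in_tideal s) -> in_tideal (flatten ss).
Proof.
elim: ss => [|s ss IH] Iss; first exact: in_tideal_nil.
apply: in_tideal_cat; first by apply: Iss; rewrite mem_head.
by apply: IH => t ts; apply: Iss; rewrite inE ts orbT.
Qed.

Definition tgen_scale (c : K) (h : tgen) : tgen :=
  let: (c0, u, ij, v, w, b) := h in (c * c0, u, ij, v, w, b).

Lemma tideal_gen_scale c h : ften_scale c (tideal_gen h) = tideal_gen (tgen_scale c h).
Proof. by case: h => [[[[[c0 u] ij] v] w] []]; rewrite /= !mulrA. Qed.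

Lemma in_tideal_scale c s : in_tideal s -> in_tideal (ften_scale c s).
Proof.
move=> [g eg]; exists (map (tgen_scale c) g) => w.
rewrite !ften_coefE ften_eval_scale -ften_coefE eg ften_coefE -ften_eval_scale.
rewrite /ften_scale map_flatten -!map_comp; congr (ften_eval _ (flatten _)).
by apply: eq_map => h /=; rewrite -tideal_gen_scale.
Qed.

Lemma in_tideal_sub s t : in_tideal s -> in_tideal t -> in_tideal (ften_sub s t).
Proof. by move=> Is It; apply: in_tideal_cat Is (in_tideal_scale _ It). Qed.

Lemma in_tideal_lincomb (P : fa K n m) (f : word -> ften) :
  (forall u, in_tideal (f u)) -> in_tideal (flatten [seq ften_scale t.1 (f t.2) | t <- P]).
Proof. by move=> If; apply: in_tideal_flatten => _ /mapP[t _ ->]; apply: in_tideal_scale. Qed.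

Lemma in_tideal_map f (hf : tgen -> tgen) s :
  (forall h, ften_map f (tideal_gen h) = tideal_gen (hf h)) ->
  in_tideal s -> in_tideal (ften_map f s).
Proof.
move=> ehf [g eg]; exists (map hf g) => w.
rewrite !ften_coefE ften_eval_map (ften_eval_coef _ eg) -(ften_eval_map (fun k => (k == w)%:R)).
rewrite /ften_map map_flatten -!map_comp; congr (ften_eval _ (flatten _)).
exact: eq_map.
Qed.

Definition tgen_wrap (a1 b1 a2 b2 : word) (h : tgen) : tgen :=
  let: (c, u, ij, v, w, b) := h in
  if b then (c, a1 ++ u, ij, v ++ b1, a2 ++ w ++ b2, true)
  else (c, a2 ++ u, ij, v ++ b2, a1 ++ w ++ b1, false).

Lemma in_tideal_wrap a1 b1 a2 b2 s :
  in_tideal s -> in_tideal (ften_map (wrap a1 b1 a2 b2) s).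
Proof.
apply: (in_tideal_map (hf := tgen_wrap a1 b1 a2 b2)).
by move=> [[[[[c u] ij] v] w] []]; rewrite /wrap /= -!catA.
Qed.

Definition tgen_swap (h : tgen) : tgen :=
  let: (c, u, ij, v, w, b) := h in (c, u, ij, v, w, ~~ b).

Lemma in_tideal_Theta s : in_tideal s -> in_tideal (Theta12 s).
Proof. by apply: (@in_tideal_map (fun k => (k.2, k.1)) tgen_swap) => -[[[[[c u] ij] v] w] []]. Qed.

Lemma in_tideal_mulr s a b :
  in_tideal s -> in_tideal (ften_mul s (ften_simple K a b)).
Proof.
move=> Is; apply: (eq_in_tideal_eval (in_tideal_wrap [::] a [::] b Is)) => F.
by rewrite ften_eval_mulr ften_eval_map.
Qed.

Lemma in_tideal_mull s a b :
  in_tideal s -> in_tideal (ften_mul (ften_simple K a b) s).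
Proof.
move=> Is; apply: (eq_in_tideal_eval (in_tideal_wrap a [::] b [::] Is)) => F.
by rewrite ften_eval_mull ften_eval_map; apply: eq_ften_eval => k; rewrite /wrap /= !cats0.
Qed.

Lemma in_tideal_cons1 y s :
  in_tideal s -> in_tideal (ften_map (fun k => (y :: k.1, k.2)) s).
Proof.
move=> Is; apply: (eq_in_tideal_eval (in_tideal_wrap [:: y] [::] [::] [::] Is)) => F.
by rewrite !ften_eval_map; apply: eq_ften_eval => k; rewrite /wrap /= !cats0.
Qed.

Lemma in_tideal_commute (x y : letter) a v w0 : isL x != isL y ->
  in_tideal (ften_sub (ften_simple K (a ++ x :: y :: v) w0)
                      (ften_simple K (a ++ y :: x :: v) w0)).
Proof.
case: x y => [i|j] [i'|j'] //= _.
  by exists [:: (1, a, (i, j'), v, w0, true)] => w;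
     rewrite /ften_coef /= !big_cons !big_nil /=; ring.
by exists [:: (-1, a, (i', j), v, w0, true)] => w;
   rewrite /ften_coef /= !big_cons !big_nil /=; ring.
Qed.

Lemma in_tideal_commute_word (x : letter) r a w0 : all (fun y => isL x != isL y) r ->
  in_tideal (ften_sub (ften_simple K (a ++ r ++ [:: x]) w0)
                      (ften_simple K (a ++ x :: r) w0)).
Proof.
elim: r a => [|y r IH] a /=.
  by move=> _; apply: (eq_in_tideal_eval in_tideal_nil) => F;
     rewrite ften_eval_sub /ften_eval big_nil subrr.
case/andP=> xy /(IH (rcons a y)) Ir.
have /(in_tideal_commute a r w0) Iyx : isL y != isL x by rewrite eq_sym.
apply: (eq_in_tideal_eval (in_tideal_cat Ir Iyx)) => F.
by rewrite ften_eval_cat !ften_eval_sub !ften_eval_simple -!cats1 -!catA /= subrKA.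
Qed.

Definition tgen_slot1 (h : tgen) : K * word * ('I_n * 'I_m) * word :=
  let: (c, u, ij, v, _, _) := h in (c, u, ij, v).

Definition tgen_slot2_nil (h : tgen) : bool :=
  let: (_, _, _, _, w, b) := h in b && (w == [::]).

Lemma ften_coef_tideal_gen_slot1 h u : ften_coef (tideal_gen h) (u, [::]) =
  if tgen_slot2_nil h then fa_coef (ideal_gen (tgen_slot1 h)) u else 0.
Proof.
have cat_cons_nil (p : word) x r : (p ++ x :: r == [::]) = false by case: p.
case: h => [[[[[c a] [i j]] v] w] b].
rewrite /ften_coef /fa_coef; case: b; rewrite /= !big_cons !big_nil /= !xpair_eqE.
  case: w => [|x w]; first by rewrite eqxx !andbT.
  by rewrite -[x :: w]cat0s cat_cons_nil !andbF !mul0r !addr0.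
by rewrite !cat_cons_nil !andbF !mul0r !addr0.
Qed.

Lemma in_tideal_slot1 s : in_tideal s ->
  exists g, forall u, ften_coef s (u, [::]) = fa_coef (flatten (map (@ideal_gen K n m) g)) u.
Proof.
move=> [g eg]; exists (map tgen_slot1 (filter tgen_slot2_nil g)) => u.
rewrite eg ften_coefE ften_eval_flatten /fa_coef big_flatten !big_map big_filter big_mkcond.
by apply: eq_bigr => h _; rewrite -ften_coefE ften_coef_tideal_gen_slot1; case: ifP.
Qed.

End TensorIdeal.

Lemma sum_indicator (T : eqType) (R : pzRingType) (s : seq T) y (G : T -> R) :
  uniq s -> \sum_(x <- s) (y == x)%:R * G x = (y \in s)%:R * G y.
Proof.
move=> s_uniq; have [ys|yNs] := boolP (y \in s).
  rewrite (bigD1_seq y) //= eqxx mul1r big1 ?addr0 // => x.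
  by rewrite eq_sym => /negbTE ->; rewrite mul0r.
rewrite mul0r big1_seq // => x /andP[_ xs].
by case: eqP => [yx|]; [rewrite yx xs in yNs | rewrite mul0r].
Qed.

Section DifferenceQuotient.
Variables (K : fieldType) (n m : nat).
Local Notation letter := (letter n m).
Local Notation word := (word n m).
Local Notation ften := (ften K n m).
Variables (pf ps : pred letter) (xs : seq letter).

(* [dl_word i] is [dq isR isL (inl i)] and [dr_word j] is [dq isL isR (inr j)]. *)
Definition dq (x : letter) (u : word) : ften :=
  [seq (1, (take q u ++ filter pf (drop q.+1 u), filter ps (drop q.+1 u)))
  | q <- iota 0 (size u) & nth x u q == x].

Lemma dq_cons x y u : dq x (y :: u) =
  (if y == x then [:: (1, (filter pf u, filter ps u))] else [::])
  ++ ften_map (fun k => (y :: k.1, k.2)) (dq x u).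
Proof.
rewrite /dq /= [iota 1 _](iotaDl 1 0) filter_map /ften_map -!map_comp.
by case: eqP => _; rewrite /= -map_comp ?drop0.
Qed.

Lemma ften_eval_dq_cons F x y u : ften_eval F (dq x (y :: u)) =
  (y == x)%:R * F (filter pf u, filter ps u)
  + ften_eval (fun k => F (y :: k.1, k.2)) (dq x u).
Proof.
rewrite dq_cons ften_eval_cat ften_eval_map.
by case: eqP => _; rewrite /ften_eval ?big_seq1 ?big_nil ?mul1r ?mulr1 ?mul0r.
Qed.

Definition dq_fa (x : letter) (P : fa K n m) : ften :=
  flatten [seq ften_scale t.1 (dq x t.2) | t <- P].

Definition commutator_sum (P : fa K n m) : ften :=
  flatten [seq ften_sub (ften_mul (dq_fa x P) (ften_simple K [:: x] [::]))
                        (ften_mul (ften_simple K [::] [:: x]) (dq_fa x P))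
          | x <- xs].

Definition split_word (u : word) : ften :=
  ften_sub (ften_simple K u [::]) (ften_simple K (filter pf u) (filter ps u)).

Definition split_part (P : fa K n m) : ften :=
  flatten [seq ften_scale t.1 (split_word t.2) | t <- P].

Lemma ften_eval_split_part F P : ften_eval F (split_part P) =
  \sum_(t <- P) t.1 * F (t.2, [::]) - \sum_(t <- P) t.1 * F (filter pf t.2, filter ps t.2).
Proof.
rewrite ften_eval_lincomb -sumrB; apply: eq_bigr => t _.
by rewrite ften_eval_sub !ften_eval_simple mulrBr.
Qed.

Lemma ften_eval_commutator_sum F P : ften_eval F (commutator_sum P) =
  \sum_(t <- P) t.1 * \sum_(x <- xs)
     (ften_eval (fun k => F (k.1 ++ [:: x], k.2 ++ [::])) (dq x t.2)
      - ften_eval (fun k => F ([::] ++ k.1, [:: x] ++ k.2)) (dq x t.2)).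
Proof.
rewrite ften_eval_flatten big_map.
under eq_bigr do rewrite ften_eval_sub ften_eval_mulr ften_eval_mull !ften_eval_lincomb -sumrB.
rewrite exchange_big; apply: eq_bigr => t _; rewrite big_distrr.
by apply: eq_bigr => x _; rewrite -mulrBr.
Qed.

Lemma in_tideal_commutator_sum P :
  (forall x, x \in xs -> in_tideal (dq_fa x P)) -> in_tideal (commutator_sum P).
Proof.
move=> Idq; apply: in_tideal_flatten => _ /mapP[x xxs ->].
by apply: in_tideal_sub; [apply: in_tideal_mulr | apply: in_tideal_mull]; apply: Idq.
Qed.

Lemma ften_eval_commutator_sum_words F P : ften_eval F (commutator_sum P) =
  \sum_(t <- P) t.1 * ften_eval F (commutator_sum [:: (1, t.2)]).
Proof.
rewrite !ften_eval_commutator_sum; apply: eq_bigr => t _.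
by rewrite ften_eval_commutator_sum big_seq1 mul1r.
Qed.

Hypothesis xs_uniq : uniq xs.

Lemma ften_eval_commutator_sum_cons F y u :
  ften_eval F (commutator_sum [:: (1, y :: u)]) =
  (y \in xs)%:R * (F (filter pf u ++ [:: y], filter ps u)
                   - F (filter pf u, y :: filter ps u))
  + ften_eval (fun k => F (y :: k.1, k.2)) (commutator_sum [:: (1, u)]).
Proof.
rewrite !ften_eval_commutator_sum !big_seq1 !mul1r.
under eq_bigr do rewrite !ften_eval_dq_cons opprD addrACA -mulrBr.
by rewrite big_split /= sum_indicator // cats0.
Qed.

Hypothesis ps_xs : forall x, ps x = (x \in xs).
Hypothesis pf_ps : forall x, pf x = ~~ ps x.
Hypothesis ps_pf_kind : forall x y, ps x -> pf y -> isL x != isL y.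

Lemma commutator_sum_word u : AA_eq (commutator_sum [:: (1, u)]) (split_word u).
Proof.
apply/AA_eq_tideal; elim: u => [|y u IH].
  apply: (eq_in_tideal_eval (@in_tideal_nil K n m)) => F.
  rewrite !ften_eval_sub !ften_eval_simple subrr subr0 ften_eval_commutator_sum.
  by rewrite big_seq1 mul1r ften_eval_nil big1 // => x _; rewrite !ften_eval_nil subrr.
pose fu := filter pf u; pose su := filter ps u.
have Iy : in_tideal (if y \in xs then
    ften_sub (ften_simple K (fu ++ [:: y]) su) (ften_simple K (y :: fu) su) else [::]).
  case: ifP => [yxs|_]; last exact: in_tideal_nil.
  apply: (in_tideal_commute_word K [::]); apply/allP => z.
  by rewrite mem_filter => /andP[pfz _]; apply: ps_pf_kind; rewrite ?ps_xs.
apply: (eq_in_tideal_eval (in_tideal_cat (in_tideal_cons1 y IH) Iy)) => F.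
rewrite ften_eval_cat ften_eval_map !ften_eval_sub ften_eval_commutator_sum_cons.
rewrite !ften_eval_simple /= pf_ps ps_xs /fu /su.
by case: (y \in xs); rewrite /= ?ften_eval_sub ?ften_eval_simple ?ften_eval_nil; ring.
Qed.

Lemma commutator_sum_split P : AA_eq (commutator_sum P) (split_part P).
Proof.
have Iw u : in_tideal (ften_sub (commutator_sum [:: (1, u)]) (split_word u)).
  exact/AA_eq_tideal/commutator_sum_word.
apply/AA_eq_tideal; apply: (eq_in_tideal_eval (in_tideal_lincomb P Iw)) => F.
rewrite ften_eval_sub ften_eval_commutator_sum_words ften_eval_lincomb.
rewrite ften_eval_flatten big_map -sumrB; apply: eq_bigr => t _.
by rewrite ften_eval_scale ften_eval_sub mulrBr.
Qed.

End DifferenceQuotient.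

Section Proposition.
Variables (K : fieldType) (n m : nat).
Local Notation word := (word n m).
Local Notation ften := (ften K n m).
Local Notation fa := (fa K n m).

Lemma left_partE (P : fa) :
  left_part P = commutator_sum (@isR n m) (@isL n m) (map inl (enum 'I_n)) P.
Proof. by rewrite /commutator_sum -map_comp. Qed.

Lemma right_partE (P : fa) :
  right_part P = commutator_sum (@isL n m) (@isR n m) (map inr (enum 'I_m)) P.
Proof. by rewrite /commutator_sum -map_comp. Qed.

Lemma left_part_split (P : fa) : AA_eq (left_part P) (split_part (@isR n m) (@isL n m) P).
Proof.
rewrite left_partE; apply: commutator_sum_split.
- by rewrite map_inj_uniq ?enum_uniq // => i j [].
- case=> [i|j] /=; last by apply/esym/mapP => -[].
  by rewrite mem_map ?mem_enum // => ? ? [].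
- by case.
- by case=> // i [].
Qed.

Lemma right_part_split (P : fa) : AA_eq (right_part P) (split_part (@isL n m) (@isR n m) P).
Proof.
rewrite right_partE; apply: commutator_sum_split.
- by rewrite map_inj_uniq ?enum_uniq // => i j [].
- case=> [i|j] /=; first by apply/esym/mapP => -[].
  by rewrite mem_map ?mem_enum // => ? ? [].
- by case.
- by case=> // j [].
Qed.

Lemma bifree_identity (P : fa) : AA_eq (ften_sub (left_part P) (Theta12 (right_part P)))
                                      (ften_sub (ten1 P) (one_ten P)).
Proof.
have /AA_eq_tideal IL := left_part_split P.
have /AA_eq_tideal/in_tideal_Theta IR := right_part_split P.
apply/AA_eq_tideal; apply: (eq_in_tideal_eval (in_tideal_sub IL IR)) => F.
rewrite !ften_eval_sub !ften_eval_Theta12 ften_eval_sub !ften_eval_split_part /=.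
by rewrite ften_eval_ten1 ften_eval_one_ten; ring.
Qed.

Lemma left_part_tideal (P : fa) :
  (forall i, AA_eq (dl i P) [::]) -> in_tideal (left_part P).
Proof.
move=> dl0; rewrite left_partE; apply: in_tideal_commutator_sum => _ /mapP[i _ ->].
exact: in_tideal_AA_eq0 (dl0 i).
Qed.

Lemma right_part_tideal (P : fa) :
  (forall j, AA_eq (dr j P) [::]) -> in_tideal (right_part P).
Proof.
move=> dr0; rewrite right_partE; apply: in_tideal_commutator_sum => _ /mapP[j _ ->].
exact: in_tideal_AA_eq0 (dr0 j).
Qed.

Lemma ften_coef_ten1_slot1 (P : fa) u : ften_coef (ten1 P) (u, [::]) = fa_coef P u.
Proof.
rewrite ften_coefE ften_eval_ten1; apply: eq_bigr => t _.
by rewrite xpair_eqE eqxx andbT mulrC.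
Qed.

Lemma ften_coef_one_ten_slot1 (P : fa) u :
  ften_coef (one_ten P) (u, [::]) = (u == [::])%:R * fa_coef P [::].
Proof.
rewrite ften_coefE ften_eval_one_ten; case: u => [|x u].
  by rewrite mul1r; apply: eq_bigr => t _; rewrite xpair_eqE eqxx mulrC.
by rewrite mul0r big1 // => t _; rewrite xpair_eqE /= mulr0.
Qed.

Lemma fa_coef_scale_one c (u : word) :
  fa_coef (fa_scale c (fa_one K n m)) u = (u == [::])%:R * c.
Proof. by rewrite /fa_coef big_seq1 mulr1 eq_sym. Qed.

Lemma bifree_kernel_scalar (P : fa) :
  (forall i, AA_eq (dl i P) [::]) -> (forall j, AA_eq (dr j P) [::]) ->
  exists c : K, A_eq P (fa_scale c (fa_one K n m)).
Proof.
move=> dl0 dr0.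
have IL := left_part_tideal dl0.
have IR := in_tideal_Theta (right_part_tideal dr0).
have /AA_eq_tideal Iid := bifree_identity P.
have IP : in_tideal (ften_sub (ten1 P) (one_ten P)).
  apply: (eq_in_tideal_eval (in_tideal_sub (in_tideal_sub IL IR) Iid)) => F.
  by rewrite !ften_eval_sub opprB addrC subrK.
have [g eg] := in_tideal_slot1 IP.
exists (fa_coef P [::]); exists g => u.
rewrite -eg ften_coefE ften_eval_sub -!ften_coefE.
by rewrite ften_coef_ten1_slot1 ften_coef_one_ten_slot1 fa_coef_scale_one.
Qed.

End Proposition.

Theorem proposition2p13 (R : realType) (n m : nat) :
  (forall P : fa R[i] n m,
     AA_eq (ften_sub (left_part P) (Theta12 (right_part P)))
           (ften_sub (ten1 P) (one_ten P))) /\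
  (forall P : fa R[i] n m,
     (forall i : 'I_n, AA_eq (dl i P) [::]) ->
     (forall j : 'I_m, AA_eq (dr j P) [::]) ->
     exists c : R[i], A_eq P (fa_scale c (fa_one R[i] n m))).
Proof. by split=> P; [apply: bifree_identity | apply: bifree_kernel_scalar]. Qed.
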